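(* Let $X$ be a finite set and let $(p_B)_{B\subseteq X}$ be nonnegative reals with $\sum_{B\subseteq X}p_B=1$. For $A\subseteq X$ let $\mathcal{S}_A=\{B\subseteq X : A\cap B\neq\emptyset \text{ and } A\cap (X\setminus B)\neq\emptyset\}$ and $s_A=\sum_{B\in\mathcal{S}_A}p_B$ (so $s_A=0$ whenever $|A|\le 1$). Then: \begin{enumerate} \item For all $A\subseteq X$, $\displaystyle s_A=\sum_{B\subseteq A}(-1)^{|B|}s_B$ (the sum including $B=\emptyset$ and $B=A$). \item If $A\subseteq X$ has odd cardinality, then $\displaystyle s_A=\sum_{\substack{B\subset A\\ |B|\text{ even}}}\frac{\mathbb{T}_{|A|-|B|}}{2^{|A|-|B|}}\,s_B$. \end{enumerate}
   Context: $p_B$ is interpreted as the probability that, at a given bi-allelic site, exactly the taxa in $B$ have state $1$ (and those in $X\setminus B$ have state $0$); $s_A$ is then the probability that the site is segregating (non-constant) over $A$. The tangent numbers $\mathbb{T}_k$ are defined by the power series $\tanh(x)=\sum_{k=0}^\infty \mathbb{T}_k\,\frac{x^k}{k!}$. *)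

From HB Require Import structures.
From mathcomp Require Import all_boot all_order all_algebra.
From mathcomp Require Import all_classical all_reals all_analysis.
Set Implicit Arguments. Unset Strict Implicit. Unset Printing Implicit Defensive.
Import Order.TTheory GRing.Theory Num.Theory.
Local Open Scope ring_scope.

Definition tanhR (R : realType) (x : R) : R :=
  (expR x - expR (- x)) / (expR x + expR (- x)).

(* Tangent numbers: tanh x = sum_k T_k x^k / k!, i.e. T_k = tanh^(k)(0). *)
Definition tangent_number (R : realType) (k : nat) : R :=
  derive1n k (@tanhR R) 0.

Definition segregating (X : finType) (A B : {set X}) : bool :=
  (A :&: B != finset.set0) && (A :&: ~: B != finset.set0).

Definition seg_prob (R : realType) (X : finType) (p : {set X} -> R) (A : {set X}) : R :=
  \sum_(B : {set X} | segregating A B) p B.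

From HB Require Import structures.
From mathcomp Require Import all_boot all_order all_algebra.
From mathcomp Require Import all_classical all_reals all_analysis.
From mathcomp Require Import ring lra.
Import Order.TTheory GRing.Theory Num.Theory.
Local Open Scope ring_scope.

(* Part 1: by inclusion-exclusion over the two blocks (C, ~: C), the indicator
   that A splits C is 1 - [A ⊆ ~: C] - [A ⊆ C] + [A = ∅], and since
   \sum_(B ⊆ A) (-1)^|B| [B ∩ K = ∅] = [A ⊆ K], the alternating sum over
   subsets B of A of the indicators for B reproduces the one for A.
   Part 2: for odd |A| part 1 reads 2 s_A = \sum_(B ⊊ A) (-1)^|B| s_B. Expanding
   the odd s_B by induction, the coefficient of an even s_D becomes
   1 - \sum_(k < n, k odd) C(n, k) c_k with n = |A| - |D| and c_k = T_k / 2^k.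
   This equals 2 c_n for odd n: the recurrence is the n-th derivative at 0 of
   tanh y * 2 cosh^2 y = sinh (2 y), expanded by Leibniz' rule. *)

Lemma sum_binomial_pascal (R : pzRingType) (a b : nat -> R) n :
  \sum_(k < n.+1) 'C(n, k)%:R * (a k * b (n - k)%N.+1 + a k.+1 * b (n - k)%N) =
  \sum_(k < n.+2) 'C(n.+1, k)%:R * (a k * b (n.+1 - k)%N).
Proof.
rewrite [RHS]big_ord_recl; under [in RHS]eq_bigr => i _ do
  rewrite lift0 binS natrD mulrDl subSS.
rewrite big_split /=; under eq_bigr => i _ do rewrite mulrDr.
rewrite big_split /= addrA; congr (_ + _).
rewrite big_ord_recl [X in _ = _ + X]big_ord_recr /= !bin0 !subn0.
rewrite bin_small // mul0r addr0; congr (_ + _).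
by apply: eq_bigr => i _; rewrite -[bump 0 i]/(i.+1) subnSK.
Qed.

Lemma is_derive_derive1n {R : realType} {h : R -> R} {k : nat} {x : R} :
  derivable (derive1n k h) x 1 -> is_derive x 1 (derive1n k h) (derive1n k.+1 h x).
Proof. by move=> hk; apply: DeriveDef => //; rewrite derive1nS derive1E. Qed.

Section Leibniz.
Context {R : realType} {f g : R -> R}.
Hypotheses (f_smooth : forall k x, derivable (derive1n k f) x 1)
           (g_smooth : forall k x, derivable (derive1n k g) x 1).

Lemma derive1n_mul n x : derive1n n (fun y => f y * g y) x =
  \sum_(k < n.+1) 'C(n, k)%:R * (derive1n k f x * derive1n (n - k)%N g x).
Proof.
elim: n x => [|n IHn] x; first by rewrite big_ord1 /= mul1r.
rewrite derive1nS derive1E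
  -(@sum_binomial_pascal _ (fun k => derive1n k f x) (fun k => derive1n k g x)).
have -> : derive1n n (fun y => f y * g y) =
    \sum_(k < n.+1) (fun y => 'C(n, k)%:R * (derive1n k f y * derive1n (n - k)%N g y)).
  by apply/funext => y; rewrite fct_sumE IHn.
have D k : is_derive x 1 (fun y => 'C(n, k)%:R * (derive1n k f y * derive1n (n - k)%N g y))
    ('C(n, k)%:R * (derive1n k f x * derive1n (n - k)%N.+1 g x +
                    derive1n k.+1 f x * derive1n (n - k)%N g x)).
  have := is_deriveZ ('C(n, k)%:R) (is_deriveM (is_derive_derive1n (f_smooth k x))
                                        (is_derive_derive1n (g_smooth (n - k)%N x))).
  by rewrite [_ *: derive1n k.+1 f x]mulrC.
by have [_ ->] := is_derive_sum (fun k : 'I_n.+1 => D k).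
Qed.

End Leibniz.

Section ExpCombinations.
Context {R : realType}.

Definition expcomb (a b k c l : R) (x : R) : R :=
  a + b * expR (k * x) + c * expR (l * x).

Lemma is_derive_expR_scale (k x : R) :
  is_derive x 1 (fun y => expR (k * y)) (expR (k * x) * k).
Proof.
have Dk : is_derive x 1 (fun y : R => k * y) k.
  by rewrite -[X in is_derive _ _ _ X]mulr1; exact: is_deriveZ.
exact: (is_derive1_comp (f := expR) (is_derive_expR _) Dk).
Qed.

Lemma is_derive_expcomb (a b k c l x : R) :
  is_derive x 1 (expcomb a b k c l) (expcomb 0 (b * k) k (c * l) l x).
Proof.
have D := is_deriveD (is_deriveD (is_derive_cst a x 1)
  (is_deriveZ b (is_derive_expR_scale k x))) (is_deriveZ c (is_derive_expR_scale l x)).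
suff -> : expcomb 0 (b * k) k (c * l) l x =
  0 + b *: (expR (k * x) * k) + c *: (expR (l * x) * l) by exact: D.
by rewrite /expcomb /= -!mulrA !(mulrC k) !(mulrC l).
Qed.

Lemma derive1n_expcomb n (a b k c l : R) :
  derive1n n (expcomb a b k c l) =
  expcomb (if n == 0%N then a else 0) (b * k ^+ n) k (c * l ^+ n) l.
Proof.
elim: n => [|n IHn]; first by rewrite /= !mulr1.
apply/funext => x; rewrite derive1nS IHn derive1E.
have [_ ->] := is_derive_expcomb (if n == 0%N then a else 0) (b * k ^+ n) k (c * l ^+ n) l x.
by rewrite !exprSr !mulrA.
Qed.

Lemma derivable_derive1n_expcomb (a b k c l : R) n (x : R) :
  derivable (derive1n n (expcomb a b k c l)) x 1.
Proof.
rewrite derive1n_expcomb.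
by case: (is_derive_expcomb (if n == 0%N then a else 0) (b * k ^+ n) k (c * l ^+ n) l x).
Qed.

Lemma expcomb0 (a b k c l : R) : expcomb a b k c l 0 = a + b + c.
Proof. by rewrite /expcomb !mulr0 expR0 !mulr1. Qed.

Lemma tanhRE : @tanhR R = fun x => expcomb 0 1 1 (-1) (-1) x / expcomb 0 1 1 1 (-1) x.
Proof. by apply/funext => x; rewrite /tanhR /expcomb !add0r !mul1r !mulN1r. Qed.

Lemma is_derive_tanhR (x : R) : is_derive x 1 (@tanhR R) (1 - tanhR x ^+ 2).
Proof.
set num := expcomb 0 1 1 (-1) (-1); set den := expcomb 0 1 1 1 (-1).
have den_gt0 : 0 < den x.
  by rewrite /den /expcomb add0r !mul1r addr_gt0 // expR_gt0.
have D := is_deriveM (is_derive_expcomb 0 1 1 (-1) (-1) x)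
  (is_deriveV (lt0r_neq0 den_gt0) (is_derive_expcomb 0 1 1 1 (-1) x)).
rewrite tanhRE; set d := (X in is_derive _ _ _ X) in D.
suff -> : 1 - (num x / den x) ^+ 2 = d by exact: D.
rewrite /d /num /den /expcomb /= -![_ *: _]/(_ * _).
have e1_gt0 := expR_gt0 (1 * x); have e2_gt0 := expR_gt0 (-1 * x).
set e1 := expR (1 * x) in e1_gt0 *; set e2 := expR (-1 * x) in e2_gt0 *.
by field; rewrite lt0r_neq0 // addr_gt0.
Qed.

Fixpoint tanh_deriv_poly (n : nat) : {poly R} :=
  if n is m.+1 then (tanh_deriv_poly m)^`() * (1 - 'X^2) else 'X.

Lemma derive1n_tanhR n : derive1n n (@tanhR R) = horner (tanh_deriv_poly n) \o @tanhR R.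
Proof.
elim: n => [|n IHn]; first by apply/funext => x /=; rewrite hornerX.
apply/funext => x; rewrite derive1nS IHn derive1E.
have [_ ->] := is_derive1_comp (is_derive_poly (tanh_deriv_poly n) (tanhR x)) (is_derive_tanhR x).
by rewrite /= hornerM hornerD hornerN hornerXn hornerC.
Qed.

Lemma derivable_derive1n_tanhR n (x : R) : derivable (derive1n n (@tanhR R)) x 1.
Proof.
rewrite derive1n_tanhR.
by case: (is_derive1_comp (is_derive_poly (tanh_deriv_poly n) (tanhR x)) (is_derive_tanhR x)).
Qed.

(* tanh y * 2 cosh^2 y = sinh (2 y) *)
Lemma tanhR_mul_expcomb :
  (fun y => tanhR y * expcomb 1 (1/2) 2 (1/2) (-2) y) = expcomb 0 (1/2) 2 (-1/2) (-2).
Proof.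
apply/funext => y; rewrite /tanhR /expcomb (_ : -2 * y = - (2 * y)); last by ring.
rewrite !expRN (expRM_natl 2).
have e_gt0 := expR_gt0 y; set e := expR y in e_gt0 *.
by rewrite add0r; field; rewrite !lt0r_neq0 // ?addr_gt0 // mulr_gt0.
Qed.

End ExpCombinations.

Section TangentNumbers.
Variable R : realType.

Local Notation T k := (tangent_number R k).

Lemma tangent_number_rec m : odd m ->
  2 * (T m / 2 ^+ m) = 1 - \sum_(k < m | odd k) 'C(m, k)%:R * (T k / 2 ^+ k).
Proof.
move=> odd_m; pose cosh2 := @expcomb R 1 (1/2) 2 (1/2) (-2).
have cosh2_deriv j : (0 < j)%N -> derive1n j cosh2 0 = (~~ odd j)%:R * 2 ^+ j.
  move=> j_gt0; rewrite derive1n_expcomb expcomb0 gtn_eqF // exprNn -signr_odd.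
  by case: (odd j); rewrite /= ?expr0 ?expr1; field.
have sinh2_deriv : derive1n m (@expcomb R 0 (1/2) 2 (-1/2) (-2)) 0 = 2 ^+ m.
  by rewrite derive1n_expcomb expcomb0 if_same exprNn -signr_odd odd_m expr1; field.
have := @derive1n_mul R _ _ derivable_derive1n_tanhR
  (derivable_derive1n_expcomb 1 (1/2) 2 (1/2) (-2)) m 0.
rewrite tanhR_mul_expcomb sinh2_deriv big_ord_recr /= subnn binn.
rewrite derive1n_expcomb expcomb0 /= !expr0 !mulr1.
under eq_bigr => k _ do rewrite cosh2_deriv ?subn_gt0 // oddB ?odd_m 1?ltnW // addTb negbK.
set S := \sum_(k < m | odd k) _.
have -> : \sum_(k < m) 'C(m, k)%:R * (T k * ((odd k)%:R * 2 ^+ (m - k)%N)) =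
    2 ^+ m * S.
  rewrite /S mulr_sumr [RHS]big_mkcond; apply: eq_bigr => k _.
  case: (odd k) => /=; last by rewrite mul0r !mulr0.
  rewrite (_ : 2 ^+ m = 2 ^+ (m - k)%N * 2 ^+ k :> R); last by rewrite -exprD subnK // ltnW.
  by field; rewrite expf_neq0 // pnatr_eq0.
rewrite /tangent_number; set t := derive1n m (@tanhR R) 0; set q := 2 ^+ m => h.
have -> : 2 * (t / q) = (2 * t) / q by rewrite mulrA.
have -> : 2 * t = q - q * S by lra.
by field; rewrite expf_neq0 // pnatr_eq0.
Qed.

End TangentNumbers.

Section SubsetSums.
Context {X : finType}.

Lemma sum_subsets_by_card (R : pzRingType) (S : {set X}) (P : pred nat) (F : nat -> R) :
  \sum_(E : {set X} | (E \subset S) && P #|E|) F #|E| =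
  \sum_(k < #|S|.+1 | P k) 'C(#|S|, k)%:R * F k.
Proof.
have card_le (E : {set X}) : E \subset S -> (#|E| < #|S|.+1)%N.
  by move=> sES; rewrite ltnS subset_leq_card.
rewrite (partition_big (fun E : {set X} => inord #|E| : 'I_#|S|.+1) (fun k => P k)) /=;
  last by move=> E /andP[/card_le ltES PE]; rewrite inordK.
apply: eq_bigr => k Pk.
rewrite (eq_bigl (fun E => E \in [set E : {set X} | E \subset S & #|E| == k])); last first.
  move=> E; rewrite inE; case: (boolP (E \subset S)) => //= /card_le ltES.
  rewrite -(inj_eq val_inj) /= inordK //.
  by case: eqP => [->|]; rewrite ?Pk ?andbF.
rewrite (eq_bigr (fun _ => F k)); last by move=> E; rewrite inE => /andP[_ /eqP ->].
by rewrite sumr_const cards_draws mulr_natl.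
Qed.

Lemma sum_subsets_sign (R : comPzRingType) (S : {set X}) :
  \sum_(E : {set X} | E \subset S) (-1) ^+ #|E| = (S == finset.set0)%:R :> R.
Proof.
rewrite (eq_bigl (fun E : {set X} => (E \subset S) && predT #|E|)); last first.
  by move=> E; rewrite andbT.
rewrite (@sum_subsets_by_card _ S predT (fun k => (-1) ^+ k)) -cards_eq0.
transitivity ((1 + (-1 : R)) ^+ #|S|); last by rewrite addrN expr0n.
by rewrite exprDn; apply: eq_bigr => k _; rewrite expr1n mul1r mulr_natl.
Qed.

Lemma sum_subsets_sign_disjoint (R : comPzRingType) (A K : {set X}) :
  \sum_(B : {set X} | B \subset A) (-1) ^+ #|B| * (B :&: K == finset.set0)%:R =
  (A :\: K == finset.set0)%:R :> R.
Proof.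
rewrite -sum_subsets_sign big_mkcond [RHS]big_mkcond; apply: eq_bigr => B _.
rewrite finset.subsetD finset.setI_eq0.
by case: (B \subset A); case: [disjoint B & K]; rewrite /= ?mulr1 ?mulr0.
Qed.

Lemma sum_subsets_between (R : pzRingType) (D A : {set X}) (P : pred {set X}) (F : {set X} -> R) :
  D \subset A ->
  \sum_(B : {set X} | [&& D \subset B, B \subset A & P B]) F B =
  \sum_(E : {set X} | (E \subset A :\: D) && P (E :|: D)) F (E :|: D).
Proof.
move=> sDA; rewrite (reindex_onto (fun E => E :|: D) (fun B => B :\: D)) /=; last first.
  by move=> B /and3P[sDB _ _]; rewrite -{2}(finset.setID B D) (finset.setIidPr sDB) finset.setUC.
apply: eq_bigl => E; rewrite finset.subsetUr finset.subUset sDA andbT /=.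
rewrite finset.setDUl finset.setDv finset.setU0 finset.subsetD.
by rewrite (sameP eqP finset.setDidPl) andbAC.
Qed.

Lemma sum_odd_subsets_between (R : pzRingType) (c : nat -> R) (D A : {set X}) :
  D \subset A -> ~~ odd #|D| ->
  \sum_(B : {set X} | [&& D \proper B, B \proper A & odd #|B|]) c (#|B| - #|D|)%N =
  \sum_(k < #|A| - #|D| | odd k) 'C(#|A| - #|D|, k)%:R * c k.
Proof.
move=> sDA even_D; set n := (#|A| - #|D|)%N.
rewrite (eq_bigl (fun B : {set X} => [&& D \subset B, B \subset A & odd #|B| && (B != A)]));
  last first.
  move=> B; rewrite !finset.properEneq andbC.
  case: (boolP (odd #|B|)) => [odd_B|]; last by rewrite !andbF.
  have -> : (D != B) by apply: contraTneq odd_B => <-.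
  by rewrite eq_sym; case: (D \subset B); case: (B \subset A); case: (A == B).
rewrite sum_subsets_between //.
rewrite (eq_big (fun E : {set X} => (E \subset A :\: D) && (odd #|E| && (#|E| < n)%N))
                (fun E : {set X} => c #|E|)); first last.
- move=> E /andP[+ _]; rewrite finset.subsetD => /andP[_ dED].
  by rewrite finset.cardsU (finset.disjoint_setI0 dED) finset.cards0 subn0 addnK.
- move=> E; case: (boolP (E \subset A :\: D)) => //=.
  rewrite finset.subsetD => /andP[sEA dED].
  have cardED : #|E :|: D| = (#|E| + #|D|)%N.
    by rewrite finset.cardsU (finset.disjoint_setI0 dED) finset.cards0 subn0.
  have sEDA : E :|: D \subset A by rewrite finset.subUset sEA.
  rewrite cardED oddD (negbTE even_D) addbF eqEcard sEDA /= cardED.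
  by rewrite -ltnNge /n ltn_subRL addnC.
rewrite (@sum_subsets_by_card _ (A :\: D) (fun k => odd k && (k < n)%N)) cardsDS //.
by rewrite -/n [RHS](big_ord_widen_cond n.+1 odd (fun k => 'C(n, k)%:R * c k) (leqnSn n)).
Qed.

End SubsetSums.

Section Segregating.
Context {X : finType}.
Implicit Types A B C : {set X}.

Lemma segregatingE (R : comPzRingType) A C :
  (segregating A C)%:R = 1 - (A :&: C == finset.set0)%:R - (A :&: ~: C == finset.set0)%:R
                         + (A == finset.set0)%:R :> R.
Proof.
have -> : (A == finset.set0) = (A :&: C == finset.set0) && (A :&: ~: C == finset.set0).
  by rewrite -finset.setU_eq0 -finset.setDE finset.setID.
rewrite /segregating.
by case: (A :&: C == finset.set0); case: (A :&: ~: C == finset.set0); rewrite /=; ring.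
Qed.

Lemma sum_subsets_sign_segregating (R : comPzRingType) A C :
  \sum_(B : {set X} | B \subset A) (-1) ^+ #|B| * (segregating B C)%:R = (segregating A C)%:R :> R.
Proof.
under eq_bigr => B _ do rewrite segregatingE !mulrDr !mulrN mulr1.
rewrite !big_split /= !sumrN sum_subsets_sign !sum_subsets_sign_disjoint.
rewrite (eq_bigr (fun B : {set X} => (-1) ^+ #|B| * (B :&: [set: X] == finset.set0)%:R));
  last by move=> B _; rewrite finset.setIT.
rewrite sum_subsets_sign_disjoint finset.setDT eqxx segregatingE.
by rewrite !finset.setDE finset.setCK /=; ring.
Qed.

Lemma seg_prob_alternating (R : realType) (p : {set X} -> R) A :
  seg_prob p A = \sum_(B : {set X} | B \subset A) (-1) ^+ #|B| * seg_prob p B.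
Proof.
rewrite /seg_prob; under [RHS]eq_bigr => B _ do rewrite big_mkcond mulr_sumr.
rewrite exchange_big big_mkcond /=; apply: eq_bigr => C _.
have ifE (b : bool) : (if b then p C else 0) = p C * b%:R by case: b; rewrite ?mulr1 ?mulr0.
under eq_bigr => B _ do rewrite ifE mulrCA.
by rewrite -mulr_sumr sum_subsets_sign_segregating ifE.
Qed.

Lemma seg_prob_odd (R : realType) (p : {set X} -> R) (A : {set X}) :
  odd #|A| -> 2 * seg_prob p A = \sum_(B : {set X} | B \proper A) (-1) ^+ #|B| * seg_prob p B.
Proof.
move=> odd_A; have := seg_prob_alternating _ p A.
rewrite (bigD1 A) //= -signr_odd odd_A expr1 mulN1r.
rewrite (eq_bigl (fun B : {set X} => B \proper A)) => [h|B]; last first.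
  by rewrite finset.properEneq andbC.
by rewrite mulr_natl mulr2n {2}h addNKr.
Qed.

End Segregating.

Section OddRecursion.
Variables (R : realType) (X : finType) (p : {set X} -> R) (c : nat -> R).
Hypothesis c_rec : forall m, odd m ->
  2 * c m = 1 - \sum_(k < m | odd k) 'C(m, k)%:R * c k.

Local Notation s := (seg_prob p).

Lemma seg_prob_odd_rec (A : {set X}) : odd #|A| ->
  s A = \sum_(D : {set X} | (D \proper A) && ~~ odd #|D|) c (#|A| - #|D|)%N * s D.
Proof.
have [n] := ubnP #|A|; elim: n A => // n IHn A /ltnSE le_An odd_A.
have odd_part : \sum_(B : {set X} | (B \proper A) && odd #|B|) s B =
    \sum_(D : {set X} | (D \proper A) && ~~ odd #|D|) s D *
      \sum_(B : {set X} | [&& D \proper B, B \proper A & odd #|B|]) c (#|B| - #|D|)%N.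
  rewrite (eq_bigr (fun B : {set X} => \sum_(D : {set X} | (D \proper B) && ~~ odd #|D|)
                                c (#|B| - #|D|)%N * s D)); last first.
    by move=> B /andP[ltBA odd_B]; apply: IHn => //; exact: leq_trans (proper_card ltBA) le_An.
  rewrite (exchange_big_dep (fun D : {set X} => (D \proper A) && ~~ odd #|D|)) /=; last first.
    by move=> B D /andP[ltBA _] /andP[ltDB ->]; rewrite (proper_trans ltDB ltBA).
  apply: eq_bigr => D /andP[_ even_D]; rewrite mulr_sumr; apply: eq_big => [B|B _].
    by rewrite (negbTE even_D) andbT andbC.
  by rewrite mulrC.
apply: (@mulfI _ 2); first by rewrite pnatr_eq0.
rewrite seg_prob_odd // (bigID (fun B : {set X} => odd #|B|)) /=.
under eq_bigr => B /andP[_ odd_B] do rewrite -signr_odd odd_B mulN1r.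
under [T in _ + T]eq_bigr => B /andP[_ even_B] do rewrite -signr_odd (negbTE even_B) mul1r.
rewrite sumrN odd_part addrC -sumrB mulr_sumr; apply: eq_bigr => D /andP[ltDA even_D].
have le_DA := proper_sub ltDA.
rewrite sum_odd_subsets_between // mulrA c_rec; first ring.
by rewrite oddB ?subset_leq_card // odd_A (negbTE even_D).
Qed.
End OddRecursion.

Theorem theorem1 (R : realType) (X : finType) (p : {set X} -> R)
  (p_ge0 : forall B : {set X}, 0 <= p B)
  (p_sum1 : \sum_(B : {set X}) p B = 1) :
  (forall A : {set X},
     seg_prob p A = \sum_(B : {set X} | B \subset A) (-1) ^+ #|B| * seg_prob p B) /\
  (forall A : {set X}, odd #|A| ->
     seg_prob p A =
       \sum_(B : {set X} | (B \proper A) && ~~ odd #|B|)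
          (tangent_number R (#|A| - #|B|)%N / 2 ^+ (#|A| - #|B|)%N) * seg_prob p B).
Proof.
split; first exact: seg_prob_alternating.
exact: seg_prob_odd_rec (@tangent_number_rec R).
Qed.
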